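(* Let $\lambda=\frac{10}{9}e^{\frac{2}{3}\pi i}$ and let $F$ be the PMT with regions $R_1=\{z:|z|<\tfrac12\}$, $R_2=\widehat{\mathbb C}\setminus\overline{R_1}$ and component functions $f_1(z)=e^{\frac23\pi i}z$, $f_2(z)=\lambda(1-z)$. Then $0$ is an elliptic fixed point with $R_1$ a rotation domain, $z_0=\frac{\lambda}{\lambda+1}$ is a repelling fixed point, $\alpha(F)=\{z_0\}$, and $F$ is $\alpha$-expanding but not hyperbolic.
   Context: A PMT is a pair $(\{R_k\}_{k=1}^K,F)$ with $R_k$ nonempty, open, connected, pairwise disjoint subsets of $\widehat{\mathbb C}$ bounded by piecewise smooth simple closed curves and with $\bigcup\overline{R_k}=\widehat{\mathbb C}$, and $F|_{R_k}=f_k|_{R_k}$ for Möbius maps $f_k$, $F$ undefined on $B(F)=\bigcup\partial R_k$. $F^{-n}(A)$ is the set of $z$ with $F^j(z)\in R(F)=\bigcup R_k$ for $j<n$ and $F^n(z)\in A$; $\mathcal B(F)=\overline{\bigcup_{n\ge0}F^{-n}(B(F))}$, $\alpha(F)=\mathcal B(F)\setminus\bigcup_{n\ge0}F^{-n}(B(F))$. Periodic point $z$ of period $n$: orbit in $R(F)$, $F^n(z)=z$; classified by the multiplier $m$ of the Möbius composition $M_z=f_{k_n}\circ\cdots\circ f_{k_1}$ along the orbit: identity type if $F^n=\mathrm{id}$ near $z$, otherwise attracting $|m|<1$, repelling $|m|>1$, elliptic $|m|=1,m\ne1$, parabolic $m=1$. A rotation domain is a periodic regular component on which $F^n$ is an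 elliptic Möbius map. $F$ is hyperbolic if it has an attracting periodic point, no elliptic, parabolic or identity periodic points, no ghost-periodic points and no wandering regular components. $F$ is $\alpha$-expanding if there is $N\ge1$ with $|(F^N)'(z)|_s>1$ for all $z\in\alpha(F)$, where $|\cdot|_s$ is the spherical derivative norm and $(F^N)'(z)$ is the derivative at $z$ of the Möbius composition along the orbit of $z$. *)

From Stdlib Require Import Reals List.
From Coquelicot Require Import Coquelicot.
Import ListNotations.
Open Scope R_scope.

(** * The Riemann sphere: [Some z] is the finite point z, [None] is infinity. *)
Definition sphere := option C.

Definition chord (x y : sphere) : R :=
  match x, y with
  | Some z, Some w => 2 * Cmod (z - w)%C / sqrt ((1 + Cmod z ^ 2) * (1 + Cmod w ^ 2))
  | Some z, None | None, Some z => 2 / sqrt (1 + Cmod z ^ 2)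
  | None, None => 0
  end.

Definition sset := sphere -> Prop.

Definition closure (A : sset) : sset :=
  fun x => forall eps, 0 < eps -> exists y, A y /\ chord x y < eps.

Definition is_open (A : sset) : Prop :=
  forall x, A x -> exists eps, 0 < eps /\ forall y, chord x y < eps -> A y.

Definition connected (S : sset) : Prop :=
  forall U V, is_open U -> is_open V ->
    (forall x, S x -> U x \/ V x) ->
    (forall x, S x -> U x -> V x -> False) ->
    (forall x, S x -> ~ U x) \/ (forall x, S x -> ~ V x).

Definition component (Om U : sset) : Prop :=
  (exists x, U x) /\ (forall x, U x -> Om x) /\ connected U /\
  (forall W, (forall x, W x -> Om x) -> connected W ->
             (forall x, U x -> W x) -> forall x, W x -> U x).

(** * Moebius maps, given by coefficients (z |-> (a z + b)/(c z + d)). *)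
Record Mobius := Mob { ma : C; mb : C; mc : C; md : C }.

Definition mdet (M : Mobius) : C := (ma M * md M - mb M * mc M)%C.

Definition mob_apply (M : Mobius) (x : sphere) : sphere :=
  match x with
  | Some z => if Ceq_dec (mc M * z + md M)%C 0%C then None
              else Some ((ma M * z + mb M) / (mc M * z + md M))%C
  | None => if Ceq_dec (mc M) 0%C then None else Some (ma M / mc M)%C
  end.

(** Composition [mob_comp M N] = M o N (matrix product). *)
Definition mob_comp (M N : Mobius) : Mobius :=
  Mob (ma M * ma N + mb M * mc N)%C (ma M * mb N + mb M * md N)%C
      (mc M * ma N + md M * mc N)%C (mc M * mb N + md M * md N)%C.

Definition mob_id : Mobius := Mob 1%C 0%C 0%C 1%C.

(** Multiplier of M at a fixed point x (derivative M'(x) in the local chart). *)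
Definition mob_mult (M : Mobius) (x : sphere) : C :=
  match x with
  | Some z => (mdet M / ((mc M * z + md M) * (mc M * z + md M)))%C
  | None => (md M / ma M)%C
  end.

Definition sph_deriv (M : Mobius) (x : sphere) : R :=
  match x with
  | Some z => Cmod (mdet M) * (1 + Cmod z ^ 2) /
              (Cmod (ma M * z + mb M)%C ^ 2 + Cmod (mc M * z + md M)%C ^ 2)
  | None => Cmod (mdet M) / (Cmod (ma M) ^ 2 + Cmod (mc M) ^ 2)
  end.

Definition rot (u : C) : Mobius := Mob u 0%C 0%C 1%C.
Definition elliptic_mobius (M : Mobius) : Prop :=
  mdet M <> 0%C /\
  exists g u, mdet g <> 0%C /\ Cmod u = 1 /\ u <> 1%C /\
    forall x, mob_apply M (mob_apply g x) = mob_apply g (mob_apply (rot u) x).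

(** * Piecewise Moebius transformations: regions R_0..R_{K-1}, maps f_0..f_{K-1}. *)
Record PMT := MkPMT { K : nat; reg : nat -> sset; fn : nat -> Mobius }.

Definition RF (F : PMT) : sset := fun x => exists k, (k < K F)%nat /\ reg F k x.

(** B(F) = union of the boundaries of the regions; since the regions are open,
    pairwise disjoint with closures covering the sphere, this is exactly the
    complement of R(F). *)
Definition BF (F : PMT) : sset := fun x => ~ RF F x.

Fixpoint itin (F : PMT) (ks : list nat) (x : sphere) : Prop :=
  match ks with
  | [] => True
  | k :: ks' => (k < K F)%nat /\ reg F k x /\ itin F ks' (mob_apply (fn F k) x)
  end.

Fixpoint push (F : PMT) (ks : list nat) (x : sphere) : sphere :=
  match ks with
  | [] => x
  | k :: ks' => push F ks' (mob_apply (fn F k) x)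
  end.

(** Moebius composition f_{k_n} o ... o f_{k_1} along the itinerary. *)
Fixpoint comp (F : PMT) (ks : list nat) : Mobius :=
  match ks with
  | [] => mob_id
  | k :: ks' => mob_comp (comp F ks') (fn F k)
  end.

(** F^n x = y (with F^j x in R(F) for j < n). *)
Definition Fn (F : PMT) (n : nat) (x y : sphere) : Prop :=
  exists ks, length ks = n /\ itin F ks x /\ push F ks x = y.

Definition preim (F : PMT) (n : nat) (A : sset) : sset :=
  fun x => exists ks, length ks = n /\ itin F ks x /\ A (push F ks x).

Definition BBF (F : PMT) : sset := closure (fun x => exists n, preim F n (BF F) x).

Definition alphaF (F : PMT) : sset :=
  fun x => BBF F x /\ ~ (exists n, preim F n (BF F) x).

Definition periodic_with (F : PMT) (n : nat) (x : sphere) (ks : list nat) : Prop :=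
  (0 < n)%nat /\ length ks = n /\ itin F ks x /\ push F ks x = x.

Definition identity_type (F : PMT) (n : nat) (x : sphere) : Prop :=
  (exists ks, periodic_with F n x ks) /\
  exists eps, 0 < eps /\ forall y, chord x y < eps -> Fn F n y y.

Definition ptype (F : PMT) (n : nat) (x : sphere) (P : C -> Prop) : Prop :=
  exists ks, periodic_with F n x ks /\ ~ identity_type F n x /\
             P (mob_mult (comp F ks) x).

Definition attracting_m (m : C) : Prop := Cmod m < 1.
Definition repelling_m (m : C) : Prop := Cmod m > 1.
Definition elliptic_m (m : C) : Prop := Cmod m = 1 /\ m <> 1%C.
Definition parabolic_m (m : C) : Prop := m = 1%C.

Definition regular_component (F : PMT) (U : sset) : Prop :=
  component (fun x => ~ BBF F x) U.

Definition rotation_domain (F : PMT) (U : sset) : Prop :=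
  regular_component F U /\
  exists n M, (0 < n)%nat /\ elliptic_mobius M /\
    (forall x, U x -> Fn F n x (mob_apply M x) /\ U (mob_apply M x)) /\
    (forall y, U y -> exists x, U x /\ mob_apply M x = y).

Definition wandering (F : PMT) (U : sset) : Prop :=
  regular_component F U /\
  forall m n x y a b V, (m < n)%nat -> U x -> U y ->
    Fn F m x a -> Fn F n y b -> regular_component F V -> V a -> V b -> False.

(** Ghost-periodic point (definition not given in the context):
    a periodic orbit of the component maps along closures of regions that
    meets B(F). *)
Fixpoint citin (F : PMT) (ks : list nat) (x : sphere) : Prop :=
  match ks with
  | [] => True
  | k :: ks' => (k < K F)%nat /\ closure (reg F k) x /\ citin F ks' (mob_apply (fn F k) x)
  end.

Fixpoint meetsB (F : PMT) (ks : list nat) (x : sphere) : Prop :=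
  match ks with
  | [] => False
  | k :: ks' => BF F x \/ meetsB F ks' (mob_apply (fn F k) x)
  end.

Definition ghost_periodic (F : PMT) (x : sphere) : Prop :=
  exists ks, (0 < length ks)%nat /\ citin F ks x /\ push F ks x = x /\ meetsB F ks x.

Definition hyperbolic (F : PMT) : Prop :=
  (exists n x, ptype F n x attracting_m) /\
  ~ (exists n x, ptype F n x elliptic_m) /\
  ~ (exists n x, ptype F n x parabolic_m) /\
  ~ (exists n x, identity_type F n x) /\
  ~ (exists x, ghost_periodic F x) /\
  ~ (exists U, wandering F U).

Definition alpha_expanding (F : PMT) : Prop :=
  exists N, (1 <= N)%nat /\
    forall x ks, alphaF F x -> length ks = N -> itin F ks x ->
      sph_deriv (comp F ks) x > 1.

Definition omega : C := (cos (2 * PI / 3), sin (2 * PI / 3)).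
Definition lam : C := (RtoC (10 / 9) * omega)%C.

Definition Reg1 : sset := fun x => exists z, x = Some z /\ Cmod z < 1 / 2.
Definition Reg2 : sset := fun x => ~ closure Reg1 x.

Definition f1 : Mobius := Mob omega 0%C 0%C 1%C.
Definition f2 : Mobius := Mob (- lam)%C lam 0%C 1%C.

Definition regEx (k : nat) : sset := match k with 0%nat => Reg1 | _ => Reg2 end.
Definition fnEx (k : nat) : Mobius := match k with 0%nat => f1 | _ => f2 end.

Definition Fex : PMT := MkPMT 2 regEx fnEx.

Definition z0 : C := (lam / (lam + 1))%C.

(* On the disc R1 the map is the rotation by omega, so R1 is invariant, 0 is elliptic and
   R1 is a rotation domain.  Outside the closed disc F is g(z) = lam (1 - z), which
   multiplies distances to its fixed point z0 (|z0| > 1) by |lam| = 10/9.  The preimages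
   of B(F) are the points whose g-orbit stays outside the disc until it lands on the
   circle |z| = 1/2; pulling a circle point back with the contraction g^-1 shows that
   they accumulate at z0, while near any other point orbits are pushed away from the
   circle.  Hence alpha(F) = {z0}, where the spherical derivative of f2 is 10/9. *)

From Pilot Require Import Defs.
From Stdlib Require Import Reals List Lra Psatz Classical.
From Coquelicot Require Import Coquelicot.
Import ListNotations.
Open Scope R_scope.

Lemma Cmod_sq_coords (x : C) : Cmod x ^ 2 = fst x ^ 2 + snd x ^ 2.
Proof. unfold Cmod. rewrite pow2_sqrt; [reflexivity | nra]. Qed.

Lemma Cmod_eq_of_sq (x : C) (r : R) : 0 <= r -> Cmod x ^ 2 = r ^ 2 -> Cmod x = r.
Proof. intros. pose proof (Cmod_ge_0 x). nra. Qed.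

Lemma Cmod_sub_sym (z w : C) : Cmod (z - w) = Cmod (w - z).
Proof. replace (z - w)%C with (- (w - z))%C by ring. apply Cmod_opp. Qed.

Lemma Cmod_sub_ge (a b : C) : Cmod a - Cmod b <= Cmod (a - b).
Proof.
  pose proof (Cmod_triangle (a - b) b). replace (a - b + b)%C with a in H by ring. lra.
Qed.

Lemma Cmod_scal (s : R) (w : C) : Cmod (RtoC s * w) = Rabs s * Cmod w.
Proof. rewrite Cmod_mult, Cmod_R. reflexivity. Qed.

Lemma sqrt3_sq : sqrt 3 ^ 2 = 3.
Proof. simpl. rewrite Rmult_1_r. apply sqrt_sqrt. lra. Qed.

Lemma omega_coords : omega = (-1/2, sqrt 3 / 2).
Proof.
  unfold omega. replace (2 * PI / 3) with (2 * (PI / 3)) by field.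
  rewrite cos_2PI3, sin_2PI3. reflexivity.
Qed.

Lemma lam_coords : lam = (-5/9, 5 * sqrt 3 / 9).
Proof.
  unfold lam. rewrite omega_coords.
  apply injective_projections; unfold Cmult, RtoC; simpl; field.
Qed.

Lemma Cmod_omega : Cmod omega = 1.
Proof.
  apply Cmod_eq_of_sq; [lra|]. rewrite Cmod_sq_coords, omega_coords. simpl fst; simpl snd.
  pose proof sqrt3_sq. nra.
Qed.

Lemma omega_neq1 : omega <> 1%C.
Proof. rewrite omega_coords. intro E. apply (f_equal fst) in E. simpl in E. lra. Qed.

Lemma Cmod_lam : Cmod lam = 10/9.
Proof.
  apply Cmod_eq_of_sq; [lra|]. rewrite Cmod_sq_coords, lam_coords. simpl fst; simpl snd.
  pose proof sqrt3_sq. nra.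
Qed.

Lemma lam_neq0 : lam <> 0%C.
Proof. intro E. pose proof Cmod_lam. rewrite E, Cmod_0 in H. lra. Qed.

Lemma lam_plus1_neq0 : (lam + 1)%C <> 0%C.
Proof. rewrite lam_coords. intro E. apply (f_equal fst) in E. simpl in E. lra. Qed.

(* |lam + 1|^2 = 91/81 < |lam|^2 = 100/81 *)
Lemma Cmod_z0_gt1 : 1 < Cmod z0.
Proof.
  unfold z0. rewrite Cmod_div by apply lam_plus1_neq0. rewrite Cmod_lam.
  pose proof (proj1 (Cmod_gt_0 _) lam_plus1_neq0).
  assert (Cmod (lam + 1) ^ 2 = 91/81).
  { rewrite Cmod_sq_coords, lam_coords. simpl fst; simpl snd. pose proof sqrt3_sq. nra. }
  apply Rmult_lt_reg_r with (Cmod (lam + 1)); [lra|].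
  unfold Rdiv. rewrite Rmult_assoc, Rinv_l by lra. nra.
Qed.

Definition g (v : C) : C := (lam * (1 - v))%C.

Lemma mob_apply_f1 (v : C) : mob_apply f1 (Some v) = Some (omega * v)%C.
Proof.
  unfold mob_apply, f1; simpl. destruct (Ceq_dec _ _) as [E|_].
  - apply (f_equal fst) in E. unfold Cmult, Cplus in E; simpl in E. lra.
  - f_equal. field.
Qed.

Lemma mob_apply_f2 (v : C) : mob_apply f2 (Some v) = Some (g v).
Proof.
  unfold mob_apply, f2; simpl. destruct (Ceq_dec _ _) as [E|_].
  - apply (f_equal fst) in E. unfold Cmult, Cplus in E; simpl in E. lra.
  - f_equal. unfold g. field.
Qed.

Lemma mob_apply_f2_infty : mob_apply f2 None = None.
Proof. unfold mob_apply, f2; simpl. destruct (Ceq_dec _ _) as [_|E]; [reflexivity | now destruct E]. Qed.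

Lemma mob_apply_id (x : sphere) : mob_apply mob_id x = x.
Proof.
  destruct x as [z|]; unfold mob_apply, mob_id; simpl; destruct (Ceq_dec _ _) as [E|E].
  - apply (f_equal fst) in E. unfold Cmult, Cplus in E; simpl in E. lra.
  - f_equal. field.
  - reflexivity.
  - now destruct E.
Qed.

Lemma g_sub (v u : C) : (g v - g u = - lam * (v - u))%C.
Proof. unfold g. ring. Qed.

Lemma g_sub_z0 (v : C) : (g v - z0 = - lam * (v - z0))%C.
Proof. unfold g, z0. field. apply lam_plus1_neq0. Qed.

Lemma g_z0 : g z0 = z0.
Proof. apply Ceq_minus. rewrite g_sub_z0. ring. Qed.

Fixpoint g_iter (n : nat) (v : C) : C :=
  match n with O => v | S n => g_iter n (g v) end.

Lemma Cmod_g_iter_sub (n : nat) (v u : C) :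
  Cmod (g_iter n v - g_iter n u) = (10/9) ^ n * Cmod (v - u).
Proof.
  revert v u. induction n as [|n IH]; intros v u; simpl; [ring|].
  rewrite IH, g_sub, Cmod_mult, Cmod_opp, Cmod_lam. ring.
Qed.

Lemma g_iter_z0 (n : nat) : g_iter n z0 = z0.
Proof. induction n as [|n IH]; simpl; [reflexivity|]. now rewrite g_z0. Qed.

Lemma Cmod_g_iter_sub_z0 (n : nat) (v : C) :
  Cmod (g_iter n v - z0) = (10/9) ^ n * Cmod (v - z0).
Proof. rewrite <- (g_iter_z0 n) at 1. apply Cmod_g_iter_sub. Qed.

Lemma g_iter_near (u v : C) (k : nat) (d : R) :
  Cmod (u - v) < d / (10/9) ^ k ->
  forall j, (j <= k)%nat -> Cmod (g_iter j u - g_iter j v) < d.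
Proof.
  intros Huv j Hj. rewrite Cmod_g_iter_sub.
  assert (Hk : 0 < (10/9) ^ k) by (apply pow_lt; lra).
  assert (Hjk : (10/9) ^ j <= (10/9) ^ k) by (apply Rle_pow; [lra | exact Hj]).
  assert (Hj0 : 0 < (10/9) ^ j) by (apply pow_lt; lra).
  apply Rmult_lt_compat_r with (r := (10/9) ^ k) in Huv; [|exact Hk].
  unfold Rdiv in Huv. rewrite Rmult_assoc, Rinv_l in Huv by lra.
  pose proof (Cmod_ge_0 (u - v)). nra.
Qed.

Definition g_inv (u : C) : C := (1 - u / lam)%C.

Lemma g_g_inv (u : C) : g (g_inv u) = u.
Proof. unfold g, g_inv. field. apply lam_neq0. Qed.

Lemma Cmod_g_inv_sub_z0 (u : C) : Cmod (g_inv u - z0) = 9/10 * Cmod (u - z0).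
Proof.
  assert (E : (g_inv u - z0 = (u - z0) * (- / lam))%C).
  { unfold g_inv, z0. field. split; [apply lam_neq0 | apply lam_plus1_neq0]. }
  rewrite E, Cmod_mult, Cmod_opp, Cmod_inv, Cmod_lam by apply lam_neq0. field.
Qed.

Fixpoint g_inv_iter (k : nat) (u : C) : C :=
  match k with O => u | S k => g_inv (g_inv_iter k u) end.

Lemma g_iter_g_inv_iter (j i : nat) (u : C) : g_iter j (g_inv_iter (j + i) u) = g_inv_iter i u.
Proof. induction j as [|j IH]; simpl; [reflexivity|]. now rewrite g_g_inv. Qed.

Lemma Cmod_g_inv_iter_sub_z0 (k : nat) (u : C) :
  Cmod (g_inv_iter k u - z0) = (9/10) ^ k * Cmod (u - z0).
Proof.
  induction k as [|k IH]; simpl; [ring|]. rewrite Cmod_g_inv_sub_z0, IH. ring.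
Qed.

Lemma chord_self (x : sphere) : chord x x = 0.
Proof.
  destruct x as [z|]; unfold chord; [|reflexivity].
  replace (z - z)%C with (RtoC 0) by ring. rewrite Cmod_0. unfold Rdiv. ring.
Qed.

Lemma sqrt_1_plus_sq_le (a : R) : 0 <= a -> sqrt (1 + a ^ 2) <= 1 + a.
Proof. intros Ha. rewrite <- (sqrt_pow2 (1 + a)) by lra. apply sqrt_le_1_alt. nra. Qed.

Lemma chord_le_Cmod (z w : C) : chord (Some z) (Some w) <= 2 * Cmod (z - w).
Proof.
  unfold chord. pose proof (Cmod_ge_0 (z - w)).
  set (P := (1 + Cmod z ^ 2) * (1 + Cmod w ^ 2)).
  assert (HP : 1 <= sqrt P).
  { rewrite <- sqrt_1. apply sqrt_le_1_alt. unfold P.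
    pose proof (pow2_ge_0 (Cmod z)). pose proof (pow2_ge_0 (Cmod w)). nra. }
  apply Rmult_le_reg_r with (sqrt P); [lra|].
  unfold Rdiv. rewrite Rmult_assoc, Rinv_l by lra. nra.
Qed.

Lemma chord_ge_Cmod (z w : C) :
  2 * Cmod (z - w) / ((1 + Cmod z) * (1 + Cmod z + Cmod (z - w))) <= chord (Some z) (Some w).
Proof.
  assert (Hw : Cmod w <= Cmod z + Cmod (z - w)).
  { pose proof (Cmod_sub_ge w z). rewrite Cmod_sub_sym in H. lra. }
  unfold chord. set (a := Cmod z) in *. set (m := Cmod (z - w)) in *.
  assert (Ha : 0 <= a) by apply Cmod_ge_0. assert (Hm : 0 <= m) by apply Cmod_ge_0.
  assert (Hs : sqrt ((1 + a ^ 2) * (1 + Cmod w ^ 2)) <= (1 + a) * (1 + a + m)).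
  { rewrite sqrt_mult by (pose proof (pow2_ge_0 a); pose proof (pow2_ge_0 (Cmod w)); lra).
    pose proof (sqrt_1_plus_sq_le (Cmod w) (Cmod_ge_0 w)).
    apply Rmult_le_compat; try apply sqrt_pos; [apply sqrt_1_plus_sq_le; lra | lra]. }
  assert (Hs0 : 0 < sqrt ((1 + a ^ 2) * (1 + Cmod w ^ 2))).
  { apply sqrt_lt_R0. pose proof (pow2_ge_0 a). pose proof (pow2_ge_0 (Cmod w)). nra. }
  unfold Rdiv. apply Rmult_le_compat_l; [lra|]. apply Rinv_le_contravar; lra.
Qed.

(* A chordal ball around a finite point lies in a given Euclidean disc:
   [m |-> 2 m / ((1 + a) (1 + a + m))] is increasing in [m]. *)
Lemma chord_small_finite (z : C) (d : R) : 0 < d -> exists eps, 0 < eps /\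
  forall y, chord (Some z) y < eps -> exists v, y = Some v /\ Cmod (z - v) < d.
Proof.
  intros Hd. set (a := Cmod z). assert (Ha : 0 <= a) by apply Cmod_ge_0.
  exists (2 * d / ((1 + a) * (1 + a + d))). split.
  { apply Rdiv_lt_0_compat; nra. }
  intros [w|] Hy.
  - exists w. split; [reflexivity|]. apply Rnot_le_lt. intros Hdm.
    pose proof (chord_ge_Cmod z w) as Hge. fold a in Hge. set (m := Cmod (z - w)) in *.
    assert (E : 2 * m / ((1 + a) * (1 + a + m)) =
                2 * d / ((1 + a) * (1 + a + d)) + 2 * (m - d) / ((1 + a + m) * (1 + a + d))).
    { field. lra. }
    assert (0 <= 2 * (m - d) / ((1 + a + m) * (1 + a + d))).
    { apply Rmult_le_pos; [lra|]. apply Rlt_le, Rinv_0_lt_compat. nra. }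
    lra.
  - unfold chord in Hy. fold a in Hy.
    assert (Hs : 0 < sqrt (1 + a ^ 2)) by (apply sqrt_lt_R0; nra).
    assert (H1 : 2 / (1 + a) <= 2 / sqrt (1 + a ^ 2)).
    { unfold Rdiv. apply Rmult_le_compat_l; [lra|]. apply Rinv_le_contravar; [lra|].
      apply sqrt_1_plus_sq_le; lra. }
    assert (H2 : 2 * d / ((1 + a) * (1 + a + d)) < 2 / (1 + a)).
    { apply Rmult_lt_reg_r with ((1 + a) * (1 + a + d)); [nra|].
      field_simplify; nra. }
    lra.
Qed.

Lemma chord_infty_ge (Rr : R) (v : C) : Cmod v <= Rr -> 2 / sqrt (1 + Rr ^ 2) <= chord None (Some v).
Proof.
  intros Hv. unfold chord. pose proof (Cmod_ge_0 v).
  assert (0 < sqrt (1 + Cmod v ^ 2)) by (apply sqrt_lt_R0; nra).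
  unfold Rdiv. apply Rmult_le_compat_l; [lra|]. apply Rinv_le_contravar; [lra|].
  apply sqrt_le_1_alt. nra.
Qed.

Lemma closure_finite_approx (A : sset) (u : C) : closure A (Some u) ->
  forall d, 0 < d -> exists v, A (Some v) /\ Cmod (u - v) < d.
Proof.
  intros Hcl d Hd. destruct (chord_small_finite u d Hd) as [eps [Heps Hball]].
  destruct (Hcl eps Heps) as [y [Ay Hy]]. destruct (Hball y Hy) as [v [-> Hv]].
  exists v. auto.
Qed.

Lemma closure_bounded (A : sset) (Rr : R) (x : sphere) :
  (forall y, A y -> exists v, y = Some v /\ Cmod v <= Rr) ->
  closure A x -> exists w, x = Some w /\ Cmod w <= Rr.
Proof.
  intros HA Hcl. destruct x as [w|].
  - exists w. split; [reflexivity|]. apply Rnot_lt_le. intros Hw.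
    destruct (closure_finite_approx A w Hcl (Cmod w - Rr)) as [v [Av Hv]]; [lra|].
    destruct (HA _ Av) as [v' [E Hv']]. injection E as <-.
    pose proof (Cmod_sub_ge w v). lra.
  - exfalso. destruct (Hcl 1 Rlt_0_1) as [y [Ay _]].
    destruct (HA y Ay) as [v [_ Hv]]. pose proof (Cmod_ge_0 v).
    assert (He : 0 < 2 / sqrt (1 + Rr ^ 2)) by (apply Rdiv_lt_0_compat; [lra | apply sqrt_lt_R0; nra]).
    destruct (Hcl _ He) as [y' [Ay' Hy']]. destruct (HA y' Ay') as [v' [-> Hv']].
    pose proof (chord_infty_ge Rr v' Hv'). lra.
Qed.

Lemma closure_bounded_below (A : sset) (Rr : R) (w : C) :
  (forall v, A (Some v) -> Rr <= Cmod v) -> closure A (Some w) -> Rr <= Cmod w.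
Proof.
  intros HA Hcl. apply Rnot_lt_le. intros Hw.
  destruct (closure_finite_approx A w Hcl (Rr - Cmod w)) as [v [Av Hv]]; [lra|].
  pose proof (HA v Av). pose proof (Cmod_sub_ge v w). rewrite Cmod_sub_sym in Hv. lra.
Qed.

Lemma closure_Reg1 (x : sphere) : closure Reg1 x <-> exists w, x = Some w /\ Cmod w <= 1/2.
Proof.
  split.
  - apply closure_bounded. intros y [z [-> Hz]]. exists z. split; [reflexivity | lra].
  - intros [w [-> Hw]] eps Heps.
    set (e := Rmin 1 eps). assert (He1 : e <= 1) by apply Rmin_l.
    assert (He2 : e <= eps) by apply Rmin_r. assert (He0 : 0 < e) by (apply Rmin_glb_lt; lra).
    pose proof (Cmod_ge_0 w).
    exists (Some (RtoC (1 - e / 2) * w)%C). split.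
    + exists (RtoC (1 - e / 2) * w)%C. split; [reflexivity|].
      rewrite Cmod_scal, Rabs_pos_eq; nra.
    + eapply Rle_lt_trans; [apply chord_le_Cmod|].
      replace (w - RtoC (1 - e / 2) * w)%C with (RtoC (e / 2) * w)%C
        by (rewrite RtoC_minus; ring).
      rewrite Cmod_scal, Rabs_pos_eq; nra.
Qed.

Lemma Reg2_iff (x : sphere) : Reg2 x <-> x = None \/ exists w, x = Some w /\ 1/2 < Cmod w.
Proof.
  unfold Reg2. rewrite closure_Reg1. split.
  - intros H. destruct x as [w|]; [right | left; reflexivity]. exists w. split; [reflexivity|].
    apply Rnot_le_lt. intros Hw. apply H. eauto.
  - intros [-> | [w [-> Hw]]] [w' [E Hw']]; [discriminate|]. injection E as <-. lra.
Qed.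

Lemma Reg1_Reg2_disjoint (x : sphere) : Reg1 x -> Reg2 x -> False.
Proof.
  intros [w [-> Hw]] H2. apply Reg2_iff in H2 as [E | [w' [E Hw']]]; [discriminate|].
  injection E as <-. lra.
Qed.

Lemma RF_Fex (x : sphere) : RF Fex x <-> Reg1 x \/ Reg2 x.
Proof.
  unfold RF; simpl. split.
  - intros [[|k] [_ Hx]]; auto.
  - intros [H|H]; [exists 0%nat | exists 1%nat]; simpl; auto.
Qed.

Lemma BF_Fex (x : sphere) : BF Fex x <-> exists w, x = Some w /\ Cmod w = 1/2.
Proof.
  unfold BF. rewrite RF_Fex, Reg2_iff. split.
  - intros H. destruct x as [w|]; [|exfalso; auto].
    exists w. split; [reflexivity|].
    destruct (Rtotal_order (Cmod w) (1/2)) as [Hw|[Hw|Hw]]; [| exact Hw |];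
      exfalso; apply H; [left; exists w | right; right; exists w]; auto.
  - intros [w [-> Hw]] [[w' [E Hw']] | [E | [w' [E Hw']]]]; try discriminate;
      injection E as <-; lra.
Qed.

Lemma Reg1_open : is_open Reg1.
Proof.
  intros x [z [-> Hz]]. destruct (chord_small_finite z (1/2 - Cmod z)) as [eps [He Hb]]; [lra|].
  exists eps. split; [exact He|]. intros y Hy. destruct (Hb _ Hy) as [v [-> Hv]].
  exists v. split; [reflexivity|]. pose proof (Cmod_sub_ge v z). rewrite Cmod_sub_sym in Hv. lra.
Qed.

Lemma Reg2_open : is_open Reg2.
Proof.
  intros x Hx. apply Reg2_iff in Hx as [-> | [w [-> Hw]]].
  - exists (2 / sqrt (1 + (1/2) ^ 2)). split.
    { apply Rdiv_lt_0_compat; [lra | apply sqrt_lt_R0; nra]. }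
    intros [v|] Hy; apply Reg2_iff; [right | left; reflexivity]. exists v. split; [reflexivity|].
    apply Rnot_le_lt. intros Hv. pose proof (chord_infty_ge _ _ Hv). lra.
  - destruct (chord_small_finite w (Cmod w - 1/2)) as [eps [He Hb]]; [lra|].
    exists eps. split; [exact He|]. intros y Hy. destruct (Hb _ Hy) as [v [-> Hv]].
    apply Reg2_iff. right. exists v. split; [reflexivity|]. pose proof (Cmod_sub_ge w v). lra.
Qed.

(* Connectedness of [0, 1], via its least upper bound. *)
Lemma path_in_open_cover (S U V : sset) (p : R -> sphere) :
  is_open U -> is_open V ->
  (forall x, S x -> U x \/ V x) -> (forall x, S x -> U x -> V x -> False) ->
  (forall t, 0 <= t <= 1 -> S (p t)) ->
  (forall t eps, 0 <= t <= 1 -> 0 < eps -> exists del, 0 < del /\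
     forall s, 0 <= s <= 1 -> Rabs (t - s) < del -> chord (p t) (p s) < eps) ->
  U (p 0) -> U (p 1).
Proof.
  intros HU HV Hcov Hdis HS Hcont H0.
  set (E := fun t => 0 <= t <= 1 /\ forall s, 0 <= s <= t -> U (p s)).
  assert (E0 : E 0). { split; [lra|]. intros s Hs. now replace s with 0 by lra. }
  assert (Eb : bound E). { exists 1. intros t [Ht _]. lra. }
  destruct (completeness E Eb (ex_intro _ 0 E0)) as [T [HT1 HT2]].
  assert (T0 : 0 <= T) by (apply HT1; exact E0).
  assert (T1 : T <= 1). { apply HT2. intros t [Ht _]. lra. }
  assert (below : forall s, 0 <= s < T -> U (p s)).
  { intros s Hs. apply NNPP. intros HUs. assert (T <= s); [|lra]. apply HT2. intros t Et.
    apply Rnot_lt_le. intros Hst. apply HUs, Et. lra. }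
  destruct (Hcov (p T) (HS T (conj T0 T1))) as [HUT|HVT].
  - destruct (HU _ HUT) as [eps [He Hb]].
    destruct (Hcont T eps (conj T0 T1) He) as [del [Hdel Hc]].
    destruct (Rlt_or_le T 1) as [Hlt|Hge]; [exfalso | now replace 1 with T by lra].
    set (t' := Rmin 1 (T + del / 2)).
    assert (A1 : t' <= 1) by apply Rmin_l. assert (A2 : t' <= T + del / 2) by apply Rmin_r.
    assert (A3 : T < t') by (apply Rmin_glb_lt; lra).
    assert (Et : E t').
    { split; [lra|]. intros s Hs. destruct (Rlt_or_le s T) as [Hl|Hl]; [apply below; lra|].
      apply Hb, Hc; [lra|]. rewrite Rabs_left1; lra. }
    apply HT1 in Et. lra.
  - exfalso. destruct (HV _ HVT) as [eps [He Hb]].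
    destruct (Hcont T eps (conj T0 T1) He) as [del [Hdel Hc]].
    destruct (Req_dec T 0) as [HT0|HT0].
    + subst T. exact (Hdis _ (HS 0 (conj T0 T1)) H0 HVT).
    + set (s := T - Rmin T del / 2).
      assert (A1 : Rmin T del <= T) by apply Rmin_l. assert (A2 : Rmin T del <= del) by apply Rmin_r.
      assert (A3 : 0 < Rmin T del) by (apply Rmin_glb_lt; lra).
      apply (Hdis (p s)); [apply HS; unfold s; lra | apply below; unfold s; lra |].
      apply Hb, Hc; [unfold s; lra|]. rewrite Rabs_pos_eq; unfold s; lra.
Qed.

Lemma Reg1_covered_from_origin (U V : sset) :
  is_open U -> is_open V ->
  (forall x, Reg1 x -> U x \/ V x) -> (forall x, Reg1 x -> U x -> V x -> False) ->
  U (Some (RtoC 0)) -> forall x, Reg1 x -> U x.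
Proof.
  intros HU HV Hcov Hdis H0 x [z [-> Hz]].
  pose proof (Cmod_ge_0 z).
  set (p := fun t : R => Some (RtoC t * z)%C).
  replace (Some z) with (p 1) by (unfold p; now rewrite Cmult_1_l). apply (path_in_open_cover Reg1 U V p HU HV Hcov Hdis).
  - intros t Ht. exists (RtoC t * z)%C. split; [reflexivity|]. rewrite Cmod_scal, Rabs_pos_eq; nra.
  - intros t eps _ He. exists eps. split; [exact He|]. intros s _ Hts.
    eapply Rle_lt_trans; [apply chord_le_Cmod|].
    replace (RtoC t * z - RtoC s * z)%C with (RtoC (t - s) * z)%C by (rewrite RtoC_minus; ring).
    rewrite Cmod_scal. pose proof (Rabs_pos (t - s)). nra.
  - unfold p. now rewrite Cmult_0_l.
Qed.

Lemma Reg1_connected : connected Reg1.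
Proof.
  intros U V HU HV Hcov Hdis.
  assert (R0 : Reg1 (Some (RtoC 0))) by (exists (RtoC 0); rewrite Cmod_0; split; [reflexivity | lra]).
  destruct (Hcov _ R0) as [H0|H0]; [right | left]; intros x Hx Hx'.
  - exact (Hdis x Hx (Reg1_covered_from_origin U V HU HV Hcov Hdis H0 x Hx) Hx').
  - refine (Hdis x Hx Hx' (Reg1_covered_from_origin V U HV HU _ _ H0 x Hx)).
    + intros y Hy. destruct (Hcov y Hy); auto.
    + intros y Hy Hv Hu. exact (Hdis y Hy Hu Hv).
Qed.

Lemma Reg1_f1 (x : sphere) : Reg1 x -> Reg1 (mob_apply f1 x).
Proof.
  intros [z [-> Hz]]. rewrite mob_apply_f1. exists (omega * z)%C.
  split; [reflexivity|]. now rewrite Cmod_mult, Cmod_omega, Rmult_1_l.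
Qed.

Lemma itin_Reg1_stays (ks : list nat) (y : sphere) :
  Reg1 y -> itin Fex ks y -> Reg1 (push Fex ks y).
Proof.
  revert y. induction ks as [|[|k] ks IH]; intros y Hy Hi; simpl in *; [exact Hy| |].
  - destruct Hi as [_ [_ Hi]]. exact (IH _ (Reg1_f1 y Hy) Hi).
  - destruct Hi as [_ [H2 _]]. exfalso. exact (Reg1_Reg2_disjoint y Hy H2).
Qed.

(* The points of [F^{-n}(B(F))]: [F] acts by [g] until the orbit lands on the circle [|z| = 1/2]. *)
Definition hits_circle (n : nat) (v : C) : Prop :=
  (forall j, (j < n)%nat -> 1/2 < Cmod (g_iter j v)) /\ Cmod (g_iter n v) = 1/2.

Lemma preim_BF_hits_circle (ks : list nat) (y : sphere) :
  itin Fex ks y -> BF Fex (push Fex ks y) ->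
  exists v, y = Some v /\ hits_circle (length ks) v.
Proof.
  revert y. induction ks as [|k ks IH]; intros y Hi HB; simpl in *.
  - apply BF_Fex in HB as [w [-> Hw]]. exists w. split; [reflexivity|].
    split; [intros j Hj; lia | exact Hw].
  - destruct Hi as [_ [Hr Hi]]. destruct k as [|k].
    + exfalso. apply HB, RF_Fex. left. exact (itin_Reg1_stays ks _ (Reg1_f1 y Hr) Hi).
    + simpl in Hr. apply Reg2_iff in Hr as [-> | [v [-> Hv]]].
      { change (fnEx (S k)) with f2 in Hi, HB. rewrite mob_apply_f2_infty in Hi, HB.
        destruct (IH None Hi HB) as [v' [E _]]. discriminate. }
      change (fnEx (S k)) with f2 in Hi, HB. rewrite mob_apply_f2 in Hi, HB.
      destruct (IH _ Hi HB) as [v' [E [Hlt Heq]]]. injection E as <-.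
      exists v. split; [reflexivity|]. split; [|exact Heq].
      intros [|j] Hj; [exact Hv | apply Hlt; lia].
Qed.

Lemma hits_circle_preim_BF (n : nat) (v : C) :
  hits_circle n v -> preim Fex n (BF Fex) (Some v).
Proof.
  intros [Hout Hon]. exists (repeat 1%nat n). split; [apply repeat_length|].
  enough (itin Fex (repeat 1%nat n) (Some v) /\
          push Fex (repeat 1%nat n) (Some v) = Some (g_iter n v)) as [Hi Hp].
  { split; [exact Hi|]. rewrite Hp. apply BF_Fex. eauto. }
  clear Hon. revert v Hout. induction n as [|n IH]; intros v Hout; [split; reflexivity|].
  cbn [repeat itin push]. change (fn Fex 1) with f2. rewrite mob_apply_f2.
  destruct (IH (g v)) as [Hi Hp]; [intros j Hj; apply (Hout (S j)); lia|].
  split; [|exact Hp]. split; [simpl; lia|]. split; [|exact Hi].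
  apply Reg2_iff. right. exists v. split; [reflexivity | apply (Hout 0%nat); lia].
Qed.

Lemma preim_BF_iff (y : sphere) :
  (exists n, preim Fex n (BF Fex) y) <-> exists n v, y = Some v /\ hits_circle n v.
Proof.
  split.
  - intros [n [ks [<- [Hi HB]]]]. destruct (preim_BF_hits_circle ks y Hi HB) as [v [-> Hv]].
    eauto.
  - intros [n [v [-> Hv]]]. exists n. exact (hits_circle_preim_BF n v Hv).
Qed.

Lemma hits_circle_outside (n : nat) (v : C) : hits_circle n v -> 1/2 <= Cmod v.
Proof. intros [Hout Hon]. destruct n as [|n]; [simpl in Hon; lra|]. apply Rlt_le, (Hout 0%nat). lia. Qed.

(* [g] expands distances to [z0], so the whole orbit segment stays near [z0]. *)
Lemma hits_circle_orbit_bounded (n : nat) (v : C) (j : nat) :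
  hits_circle n v -> (j <= n)%nat -> Cmod (g_iter j v - z0) <= Cmod z0 + 1/2.
Proof.
  intros [_ Hon] Hj.
  assert (Hmono : Cmod (g_iter j v - z0) <= Cmod (g_iter n v - z0)).
  { rewrite !Cmod_g_iter_sub_z0. apply Rmult_le_compat_r; [apply Cmod_ge_0|].
    apply Rle_pow; [lra | exact Hj]. }
  pose proof (Cmod_triangle (g_iter n v) (- z0)). rewrite Cmod_opp in H. fold (g_iter n v - z0)%C in H.
  lra.
Qed.

Lemma not_hits_circle_z0 (n : nat) : ~ hits_circle n z0.
Proof. intros [_ Hon]. rewrite g_iter_z0 in Hon. pose proof Cmod_z0_gt1. lra. Qed.

Lemma BF_BBF (x : sphere) : BF Fex x -> BBF Fex x.
Proof.
  intros H eps He. exists x. split; [exists 0%nat, []; simpl; auto|]. now rewrite chord_self.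
Qed.

Lemma Reg1_regular (x : sphere) : Reg1 x -> ~ BBF Fex x.
Proof.
  intros [z [-> Hz]] HB. apply (Rlt_not_le _ _ Hz).
  apply (closure_bounded_below (fun y => exists n, preim Fex n (BF Fex) y) (1/2) z); [|exact HB].
  intros v Hv. apply preim_BF_iff in Hv as [n [v' [E Hv']]]. injection E as <-.
  exact (hits_circle_outside n v Hv').
Qed.

Lemma infty_regular : ~ BBF Fex None.
Proof.
  intros HB.
  destruct (closure_bounded (fun y => exists n, preim Fex n (BF Fex) y) (2 * Cmod z0 + 1/2) None)
    as [w [E _]]; [|exact HB|discriminate].
  intros y Hy. apply preim_BF_iff in Hy as [n [v [-> Hv]]]. exists v. split; [reflexivity|].
  pose proof (hits_circle_orbit_bounded n v 0 Hv ltac:(lia)). simpl in H.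
  pose proof (Cmod_triangle (v - z0) z0). replace (v - z0 + z0)%C with v in H0 by ring. lra.
Qed.

(* Pull a circle point back towards [z0] with the contraction [g_inv]. *)
Definition circle_point : C := (z0 * RtoC (1/2 / Cmod z0))%C.

Lemma circle_point_facts : Cmod circle_point = 1/2 /\ Cmod (circle_point - z0) = Cmod z0 - 1/2.
Proof.
  pose proof Cmod_z0_gt1. unfold circle_point. split.
  - rewrite Cmod_mult, Cmod_R, Rabs_pos_eq by (apply Rdiv_le_0_compat; lra). field. lra.
  - replace (z0 * RtoC (1/2 / Cmod z0) - z0)%C with (z0 * RtoC (1/2 / Cmod z0 - 1))%C
      by (rewrite RtoC_minus; ring).
    rewrite Cmod_mult, Cmod_R, Rabs_left1.
    + field. lra.
    + apply Rle_minus, Rle_div_l; lra.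
Qed.

Lemma hits_circle_pullback (k : nat) : hits_circle k (g_inv_iter k circle_point).
Proof.
  destruct circle_point_facts as [Hw Hd]. pose proof Cmod_z0_gt1. split.
  - intros j Hj. replace k with (j + S (k - S j))%nat by lia. rewrite g_iter_g_inv_iter.
    set (i := (k - S j)%nat).
    pose proof (Cmod_g_inv_iter_sub_z0 (S i) circle_point) as Hi.
    pose proof (pow_lt_1_compat (9/10) (S i) ltac:(lra) ltac:(lia)) as Hpow.
    pose proof (Cmod_sub_ge z0 (g_inv_iter (S i) circle_point)) as Htri.
    rewrite Cmod_sub_sym, Hi, Hd in Htri. nra.
  - replace k with (k + 0)%nat at 2 by lia. rewrite g_iter_g_inv_iter. exact Hw.
Qed.

Lemma z0_in_BBF : BBF Fex (Some z0).
Proof.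
  intros eps He. destruct circle_point_facts as [_ Hd]. pose proof Cmod_z0_gt1.
  destruct (pow_lt_1_zero (9/10) ltac:(rewrite Rabs_pos_eq; lra) (eps / (2 * Cmod z0)))
    as [N HN]; [apply Rdiv_lt_0_compat; lra|].
  specialize (HN N (le_n N)). rewrite Rabs_pos_eq in HN by (apply pow_le; lra).
  exists (Some (g_inv_iter N circle_point)). split.
  - apply preim_BF_iff. exists N, (g_inv_iter N circle_point).
    split; [reflexivity | apply hits_circle_pullback].
  - eapply Rle_lt_trans; [apply chord_le_Cmod|].
    rewrite Cmod_sub_sym, Cmod_g_inv_iter_sub_z0, Hd.
    apply Rmult_lt_compat_r with (r := 2 * Cmod z0) in HN; [|lra].
    unfold Rdiv in HN. rewrite Rmult_assoc, Rinv_l in HN by lra.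
    pose proof (pow_le (9/10) N ltac:(lra)). nra.
Qed.

Lemma finite_margin (a : nat -> R) (k : nat) :
  (forall j, (j <= k)%nat -> a j <> 0) ->
  exists del, 0 < del /\ forall j, (j <= k)%nat -> del <= Rabs (a j).
Proof.
  induction k as [|k IH]; intros Ha.
  - exists (Rabs (a 0%nat)). split; [apply Rabs_pos_lt, Ha; lia|].
    intros j Hj. replace j with 0%nat by lia. lra.
  - destruct IH as [del [Hdel Hb]]; [intros j Hj; apply Ha; lia|].
    exists (Rmin del (Rabs (a (S k)))). split.
    { apply Rmin_glb_lt; [exact Hdel | apply Rabs_pos_lt, Ha; lia]. }
    intros j Hj. destruct (Nat.eq_dec j (S k)) as [->|Hne]; [apply Rmin_r|].
    eapply Rle_trans; [apply Rmin_l | apply Hb; lia].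
Qed.

Lemma first_crossing (a : nat -> R) (c : R) (N : nat) :
  (forall n, (forall j, (j < n)%nat -> c < a j) -> a n <> c) ->
  (forall j, (j <= N)%nat -> c < a j) \/
  exists m, (m <= N)%nat /\ (forall j, (j < m)%nat -> c < a j) /\ a m < c.
Proof.
  intros Ha. induction N as [|N [Hout | [m [Hm [Hbefore Hin]]]]].
  - destruct (Rtotal_order (a 0%nat) c) as [Hl|[He|Hg]].
    + right. exists 0%nat. split; [lia|]. split; [intros j Hj; lia | exact Hl].
    + exfalso. apply (Ha 0%nat); [intros j Hj; lia | exact He].
    + left. intros j Hj. now replace j with 0%nat by lia.
  - destruct (Rtotal_order (a (S N)) c) as [Hl|[He|Hg]].
    + right. exists (S N). split; [lia|]. split; [intros j Hj; apply Hout; lia | exact Hl].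
    + exfalso. apply (Ha (S N)); [intros j Hj; apply Hout; lia | exact He].
    + left. intros j Hj. destruct (Nat.eq_dec j (S N)) as [->|]; [exact Hg | apply Hout; lia].
  - right. exists m. split; [lia|]. auto.
Qed.

Lemma g_iter_side_stable (u : C) (k : nat) :
  (forall j, (j <= k)%nat -> Cmod (g_iter j u) <> 1/2) ->
  exists del, 0 < del /\ forall v, Cmod (u - v) < del -> forall j, (j <= k)%nat ->
    (1/2 < Cmod (g_iter j u) -> 1/2 < Cmod (g_iter j v)) /\
    (Cmod (g_iter j u) < 1/2 -> Cmod (g_iter j v) < 1/2).
Proof.
  intros Hu.
  destruct (finite_margin (fun j => Cmod (g_iter j u) - 1/2) k) as [mu [Hmu Hb]].
  { intros j Hj. specialize (Hu j Hj). lra. }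
  exists (mu / (10/9) ^ k). split; [apply Rdiv_lt_0_compat; [exact Hmu | apply pow_lt; lra]|].
  intros v Hv j Hj. pose proof (g_iter_near u v k mu Hv j Hj) as Hnear.
  specialize (Hb j Hj). simpl in Hb.
  pose proof (Cmod_sub_ge (g_iter j u) (g_iter j v)).
  pose proof (Cmod_sub_ge (g_iter j v) (g_iter j u)). rewrite Cmod_sub_sym in H0.
  split; intros Hc; [rewrite Rabs_pos_eq in Hb | rewrite Rabs_left in Hb]; lra.
Qed.

Lemma falling_orbit_avoids_circle (u : C) (m : nat) :
  (forall j, (j < m)%nat -> 1/2 < Cmod (g_iter j u)) -> Cmod (g_iter m u) < 1/2 ->
  exists del, 0 < del /\ forall n v, Cmod (u - v) < del -> ~ hits_circle n v.
Proof.
  intros Hbefore Hin.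
  destruct (g_iter_side_stable u m) as [del [Hdel Hstab]].
  { intros j Hj. destruct (Nat.eq_dec j m) as [->|]; [lra|].
    specialize (Hbefore j ltac:(lia)). lra. }
  exists del. split; [exact Hdel|]. intros n v Huv [Hlt Hon].
  assert (Hm : Cmod (g_iter m v) < 1/2) by exact (proj2 (Hstab v Huv m (le_n m)) Hin).
  destruct (Compare_dec.le_lt_dec n m) as [Hnm|Hmn].
  - destruct (Nat.eq_dec n m) as [->|Hne]; [lra|].
    assert (1/2 < Cmod (g_iter n v)); [|lra].
    apply (Hstab v Huv n Hnm). apply Hbefore. lia.
  - specialize (Hlt m Hmn). lra.
Qed.

Lemma escaping_orbit_avoids_circle (u : C) (N : nat) :
  (forall j, (j <= N)%nat -> 1/2 < Cmod (g_iter j u)) ->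
  Cmod z0 + 2 <= Cmod (g_iter N u - z0) ->
  exists del, 0 < del /\ forall n v, Cmod (u - v) < del -> ~ hits_circle n v.
Proof.
  intros Hout Hfar.
  destruct (g_iter_side_stable u N) as [del [Hdel Hstab]].
  { intros j Hj. specialize (Hout j Hj). lra. }
  assert (Hpow : 0 < (10/9) ^ N) by (apply pow_lt; lra).
  exists (Rmin del (1 / (10/9) ^ N)). split.
  { apply Rmin_glb_lt; [exact Hdel | apply Rdiv_lt_0_compat; lra]. }
  intros n v Huv Hv.
  pose proof (Rmin_l del (1 / (10/9) ^ N)). pose proof (Rmin_r del (1 / (10/9) ^ N)).
  destruct (Compare_dec.le_lt_dec n N) as [HnN|HNn].
  - destruct Hv as [_ Hon]. assert (1/2 < Cmod (g_iter n v)); [|lra].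
    apply (Hstab v ltac:(lra) n HnN). exact (Hout n HnN).
  - pose proof (g_iter_near u v N 1 ltac:(lra) N (le_n N)) as Hnear.
    pose proof (hits_circle_orbit_bounded n v N Hv ltac:(lia)) as Hbd.
    pose proof (Cmod_triangle (g_iter N u - g_iter N v) (g_iter N v - z0)) as Htri.
    replace (g_iter N u - g_iter N v + (g_iter N v - z0))%C with (g_iter N u - z0)%C in Htri
      by ring.
    lra.
Qed.

(* Within a fixed time [N] the orbit of [u] either falls into the open disc or gets
   far from [z0] without touching the circle; since [u] is not itself a preimage of the
   circle, [first_crossing] applies. *)
Lemma not_BBF_off_z0 (u : C) :
  u <> z0 -> (forall n, ~ hits_circle n u) -> ~ BBF Fex (Some u).
Proof.
  intros Huz Hno HB.
  assert (Hdz : 0 < Cmod (u - z0)) by (apply Cmod_gt_0; intro E; apply Huz, Ceq_minus, E).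
  destruct (Pow_x_infinity (10/9) ltac:(rewrite Rabs_pos_eq; lra) ((Cmod z0 + 2) / Cmod (u - z0)))
    as [N HN].
  specialize (HN N (le_n N)). rewrite Rabs_pos_eq in HN by (apply pow_le; lra).
  apply Rge_le in HN.
  assert (Hfar : Cmod z0 + 2 <= Cmod (g_iter N u - z0)).
  { rewrite Cmod_g_iter_sub_z0. apply Rmult_le_compat_r with (r := Cmod (u - z0)) in HN; [|lra].
    unfold Rdiv in HN. rewrite Rmult_assoc, Rinv_l in HN by lra. lra. }
  assert (Havoid : exists del, 0 < del /\ forall n v, Cmod (u - v) < del -> ~ hits_circle n v).
  { destruct (first_crossing (fun j => Cmod (g_iter j u)) (1/2) N)
      as [Hout | [m [_ [Hbefore Hin]]]].
    - intros n Hb Hon. exact (Hno n (conj Hb Hon)).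
    - exact (escaping_orbit_avoids_circle u N Hout Hfar).
    - exact (falling_orbit_avoids_circle u m Hbefore Hin). }
  destruct Havoid as [del [Hdel Havoid]].
  destruct (closure_finite_approx _ u HB del Hdel) as [v [Hv Huv]].
  apply preim_BF_iff in Hv as [n [v' [E Hv]]]. injection E as <-.
  exact (Havoid n v Huv Hv).
Qed.

Lemma alphaF_Fex (x : sphere) : alphaF Fex x <-> x = Some z0.
Proof.
  split.
  - intros [HB Hn]. destruct x as [u|]; [|exfalso; exact (infty_regular HB)].
    destruct (Ceq_dec u z0) as [->|Hne]; [reflexivity|]. exfalso.
    apply (not_BBF_off_z0 u Hne); [|exact HB].
    intros n Hhit. apply Hn, preim_BF_iff. eauto.
  - intros ->. split; [exact z0_in_BBF|].
    intros Hp. apply preim_BF_iff in Hp as [n [v [E Hv]]]. injection E as <-.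
    exact (not_hits_circle_z0 n Hv).
Qed.

Lemma Fex_fixed_point (v : C) : Defs.Fn Fex 1 (Some v) (Some v) -> v = RtoC 0 \/ v = z0.
Proof.
  intros [[|k [|k' ks]] [Hl [_ Hp]]]; simpl in Hl; try lia. cbn [push] in Hp.
  destruct k as [|k].
  - left. change (fn Fex 0) with f1 in Hp. rewrite mob_apply_f1 in Hp. injection Hp as Hp.
    replace v with (((omega - 1) * v) / (omega - 1))%C
      by (field; intro E; apply omega_neq1, Ceq_minus, E).
    replace ((omega - 1) * v)%C with (omega * v - v)%C by ring. rewrite Hp.
    unfold Cdiv. ring.
  - right. change (fn Fex (S k)) with f2 in Hp. rewrite mob_apply_f2 in Hp. injection Hp as Hp.
    apply Ceq_minus. pose proof (g_sub_z0 v) as E. rewrite Hp in E.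
    replace (v - z0)%C with (((1 + lam) * (v - z0)) / (1 + lam))%C
      by (field; rewrite Cplus_comm; apply lam_plus1_neq0).
    replace ((1 + lam) * (v - z0))%C with (v - z0 - - lam * (v - z0))%C by ring.
    rewrite <- E. unfold Cdiv. ring.
Qed.

Lemma Cmod_sub_fixed_points (a b : C) :
  (a = RtoC 0 \/ a = z0) -> (b = RtoC 0 \/ b = z0) -> Cmod (a - b) = 0 \/ Cmod (a - b) = Cmod z0.
Proof.
  intros [-> | ->] [-> | ->]; [left | right | right | left].
  - replace (RtoC 0 - RtoC 0)%C with (RtoC 0) by ring. apply Cmod_0.
  - replace (RtoC 0 - z0)%C with (- z0)%C by ring. apply Cmod_opp.
  - f_equal. ring.
  - replace (z0 - z0)%C with (RtoC 0) by ring. apply Cmod_0.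
Qed.

(* The fixed points of [F] are isolated, so [F] is not the identity near them. *)
Lemma fixed_point_not_identity_type (v : C) :
  v = RtoC 0 \/ v = z0 -> ~ identity_type Fex 1 (Some v).
Proof.
  intros Hv [_ [eps [He Hid]]]. pose proof Cmod_z0_gt1.
  set (r := Rmin (1/4) (eps/4)).
  assert (Hr1 : r <= 1/4) by apply Rmin_l. assert (Hr2 : r <= eps/4) by apply Rmin_r.
  assert (Hr0 : 0 < r) by (apply Rmin_glb_lt; lra).
  assert (Hfix : (v + RtoC r)%C = RtoC 0 \/ (v + RtoC r)%C = z0).
  { apply Fex_fixed_point, Hid. eapply Rle_lt_trans; [apply chord_le_Cmod|].
    replace (v - (v + RtoC r))%C with (- RtoC r)%C by ring.
    rewrite Cmod_opp, Cmod_R, Rabs_pos_eq; lra. }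
  assert (Hr : Cmod (v + RtoC r - v) = r).
  { replace (v + RtoC r - v)%C with (RtoC r) by ring. rewrite Cmod_R, Rabs_pos_eq; lra. }
  destruct (Cmod_sub_fixed_points _ _ Hfix Hv); lra.
Qed.

Lemma origin_elliptic : ptype Fex 1 (Some (RtoC 0)) elliptic_m.
Proof.
  exists [0%nat]. split; [|split].
  - split; [lia|]. split; [reflexivity|]. split.
    + simpl. split; [lia|]. split; [|exact I]. exists (RtoC 0). rewrite Cmod_0. split; [reflexivity | lra].
    + cbn [push]. change (fn Fex 0) with f1. rewrite mob_apply_f1. f_equal. ring.
  - apply fixed_point_not_identity_type. now left.
  - replace (mob_mult (Defs.comp Fex [0%nat]) (Some (RtoC 0))) with omega
      by (unfold mob_mult, Defs.comp, mob_comp, mob_id, mdet; simpl; field).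
    split; [apply Cmod_omega | apply omega_neq1].
Qed.

Lemma Reg1_regular_component : regular_component Fex Reg1.
Proof.
  assert (R0 : Reg1 (Some (RtoC 0))) by (exists (RtoC 0); rewrite Cmod_0; split; [reflexivity | lra]).
  split; [eauto|]. split; [exact Reg1_regular|]. split; [exact Reg1_connected|].
  intros W HW Wc Hsub.
  assert (HWR : forall x, W x -> Reg1 x \/ Reg2 x).
  { intros x Wx. apply RF_Fex, NNPP. intros Hn. exact (HW x Wx (BF_BBF x Hn)). }
  destruct (Wc Reg1 Reg2 Reg1_open Reg2_open HWR) as [Hc|Hc].
  - intros y _ H1 H2. exact (Reg1_Reg2_disjoint _ H1 H2).
  - exfalso. exact (Hc _ (Hsub _ R0) R0).
  - intros x Wx. destruct (HWR x Wx) as [H|H]; [exact H | exfalso; exact (Hc x Wx H)].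
Qed.

Lemma Reg1_rotation_domain : rotation_domain Fex Reg1.
Proof.
  split; [exact Reg1_regular_component|].
  assert (Homega : omega <> 0%C) by (intro E; pose proof Cmod_omega; rewrite E, Cmod_0 in H; lra).
  exists 1%nat, f1. split; [lia|]. split; [|split].
  - split; [replace (mdet f1) with omega by (unfold mdet, f1; simpl; ring); exact Homega|].
    exists mob_id, omega. split; [|split; [exact Cmod_omega | split; [exact omega_neq1|]]].
    + replace (mdet mob_id) with (RtoC 1) by (unfold mdet, mob_id; simpl; ring). exact C1_nz.
    + intros x. now rewrite !mob_apply_id.
  - intros x Hx. split; [|exact (Reg1_f1 x Hx)].
    exists [0%nat]. split; [reflexivity|]. split; [|reflexivity]. simpl. auto.
  - intros y [w [-> Hw]]. exists (Some (w / omega)%C). split.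
    + exists (w / omega)%C. split; [reflexivity|]. rewrite Cmod_div, Cmod_omega by exact Homega. lra.
    + rewrite mob_apply_f1. f_equal. field. exact Homega.
Qed.

Lemma z0_repelling : ptype Fex 1 (Some z0) repelling_m.
Proof.
  pose proof Cmod_z0_gt1.
  exists [1%nat]. split; [|split].
  - split; [lia|]. split; [reflexivity|]. split.
    + simpl. split; [lia|]. split; [|exact I]. apply Reg2_iff. right. exists z0. split; [reflexivity | lra].
    + cbn [push]. change (fn Fex 1) with f2. now rewrite mob_apply_f2, g_z0.
  - apply fixed_point_not_identity_type. now right.
  - replace (mob_mult (Defs.comp Fex [1%nat]) (Some z0)) with (- lam)%C
      by (unfold mob_mult, Defs.comp, mob_comp, mob_id, mdet; simpl; field).
    unfold repelling_m. rewrite Cmod_opp, Cmod_lam. lra.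
Qed.

(* Only [z0] lies in [alpha(F)], where [|f2'|_s = |lam| (1 + |z0|^2) / (|z0|^2 + 1) = 10/9]. *)
Lemma Fex_alpha_expanding : alpha_expanding Fex.
Proof.
  exists 1%nat. split; [lia|]. intros x ks Ha Hl Hi. apply alphaF_Fex in Ha as ->.
  destruct ks as [|[|k] [|k' ks]]; simpl in Hl; try lia; destruct Hi as [_ [Hr _]].
  - exfalso. destruct Hr as [w [E Hw]]. injection E as <-. pose proof Cmod_z0_gt1. lra.
  - change (Defs.comp Fex [S k]) with (mob_comp mob_id f2). unfold sph_deriv.
    replace (ma (mob_comp mob_id f2) * z0 + mb (mob_comp mob_id f2))%C with z0
      by (rewrite <- g_z0 at 1; unfold g, mob_comp, mob_id, f2; simpl; ring).
    replace (mc (mob_comp mob_id f2) * z0 + md (mob_comp mob_id f2))%C with (RtoC 1)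
      by (unfold mob_comp, mob_id, f2; simpl; ring).
    replace (mdet (mob_comp mob_id f2)) with (- lam)%C
      by (unfold mdet, mob_comp, mob_id, f2; simpl; ring).
    rewrite Cmod_opp, Cmod_lam, Cmod_R, Rabs_R1. pose proof (Cmod_ge_0 z0).
    replace (10 / 9 * (1 + Cmod z0 ^ 2) / (Cmod z0 ^ 2 + 1 ^ 2)) with (10/9) by (field; nra).
    lra.
Qed.

Theorem mainTheorem6 :
  ptype Fex 1 (Some (RtoC 0)) elliptic_m /\
  rotation_domain Fex Reg1 /\
  ptype Fex 1 (Some z0) repelling_m /\
  (forall x, alphaF Fex x <-> x = Some z0) /\
  alpha_expanding Fex /\
  ~ hyperbolic Fex.
Proof.
  split; [exact origin_elliptic|]. split; [exact Reg1_rotation_domain|].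
  split; [exact z0_repelling|]. split; [exact alphaF_Fex|].
  split; [exact Fex_alpha_expanding|].
  intros [_ [Hno_elliptic _]]. apply Hno_elliptic. exists 1%nat, (Some (RtoC 0)). exact origin_elliptic.
Qed.
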